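(* Let $\bar\ell,m,n,k$ satisfy $m<1+n/\bar\ell$, $1\le k\le m$, and let $q=2^t\ge n+k$. Then there exists an $[[n,k,d]]_q$ qudit CSS code $\mathcal Q$ with $d\ge\min(n-m+1,m-k+1)$ such that for any $e,\ell\le\bar\ell$, every $e$-variate polynomial $P$ over $\mathbb F_q$ of degree at most $\ell$, every $A\in[k]$ and every $\beta\in\mathbb F_q$, there is a transversal (depth-one, single-qudit-per-position) physical gate $\bigotimes_{i=1}^nU_P^{\beta_i}[i]$ on $e$ code blocks which acts on $\mathcal Q^{\otimes e}$, up to a global phase, as $\overline{U_P^\beta[A]}$, i.e. multiplies $\overline{\ket{u^{(1)}}}\cdots\overline{\ket{u^{(e)}}}$ by $(-1)^{\mathrm{tr}(\beta P(u^{(1)}_A,\dots,u^{(e)}_A))}$. In particular this includes single-index addressable $\mathsf{C^{(\ell-1)}Z}$ gates across $\ell$ blocks and addressable single-qudit gates $U_\ell^\beta$. Choosing $m=\lfloor n/\bar\ell\rfloor$ and $k=m/2$, the codes are asymptotically good over growing $q$ with rate and relative distance at least $1/(2\bar\ell)$ asymptotically. *)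

From HB Require Import structures.
From mathcomp Require Import all_boot all_order all_algebra all_field.
From mathcomp Require Import mpoly.
Set Implicit Arguments.
Unset Strict Implicit.
Unset Printing Implicit Defensive.
Import Order.TTheory GRing.Theory Num.Theory.
Local Open Scope ring_scope.

Section QuditCSS.
Variable F : finFieldType.

Definition is_linear_code n (C : {set 'rV[F]_n}) : Prop :=
  0 \in C /\ forall (a : F) (x y : 'rV[F]_n), x \in C -> y \in C -> a *: x + y \in C.

Definition dotv n (x y : 'rV[F]_n) : F := \sum_(i < n) x 0 i * y 0 i.

Definition dual_code n (C : {set 'rV[F]_n}) : {set 'rV[F]_n} :=
  [set y | [forall x in C, dotv x y == 0]].

Definition wt n (x : 'rV[F]_n) : nat := #|[set i : 'I_n | x 0 i != 0]|.

(* An [[n,k]]_q qudit CSS code CSS(X,C1;Z,C2) with C2^perp <= C1, together with a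
   linear encoding matrix G : F^k -> C1 whose image is a complement of C2^perp in C1.
   The logical basis state |u> (u in F^k) is the uniform superposition over the coset
   u G + C2^perp. *)
Definition is_CSS_code n k (C1 C2 : {set 'rV[F]_n}) (G : 'M[F]_(k, n)) : Prop :=
  [/\ is_linear_code C1 /\ is_linear_code C2,
      dual_code C2 \subset C1,
      (forall u : 'rV[F]_k, u *m G \in C1),
      (forall u : 'rV[F]_k, u *m G \in dual_code C2 -> u = 0)
    & #|C1| = (#|F| ^ k * #|dual_code C2|)%N ].

Definition css_dist_ge n (C1 C2 : {set 'rV[F]_n}) (d : nat) : Prop :=
  (forall x, x \in C1 -> x \notin dual_code C2 -> (d <= wt x)%N) /\
  (forall x, x \in C2 -> x \notin dual_code C1 -> (d <= wt x)%N).

(* absolute trace F_q -> F_2 (valued in the prime subfield {0,1} of F), q = 2^t *)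
Definition abs_trace (x : F) : F := \sum_(i < logn 2 #|F|) x ^+ (2 ^ i).

Definition sgnF (a : F) : algC := if abs_trace a == 0 then 1 else -1.

(* (unnormalized) states of e code blocks of n qudits each: amplitude functions
   on computational basis states x = (x^(1),...,x^(e)) *)
Definition state n e := {ffun 'I_e -> 'rV[F]_n} -> algC.

Definition logical_ket n k e (C2 : {set 'rV[F]_n}) (G : 'M[F]_(k, n))
  (u : 'I_e -> 'rV[F]_k) : state n e :=
  fun x => if [forall j, x j - u j *m G \in dual_code C2] then 1 else 0.

Definition phys_gate n e (P : {mpoly F[e]}) (bs : 'I_n -> F) (psi : state n e) : state n e :=
  fun x => (\prod_(i < n) sgnF (bs i * meval (fun j => x j 0 i) P)) * psi x.

End QuditCSS.

From HB Require Import structures.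
From mathcomp Require Import all_boot all_order all_algebra all_field.
From mathcomp Require Import mpoly.
From mathcomp Require Import zify.
Import Order.TTheory GRing.Theory Num.Theory.
Local Open Scope ring_scope.
Set Implicit Arguments. Unset Strict Implicit.

(* The code is a Reed-Solomon CSS code on [n] nodes [alpha i], with [k] further nodes
   [gamma a] carrying the logical qudits: [C1] is the evaluation code of polynomials of
   degree [< m], [C2^perp] that of the multiples [h * Z] with [deg h < m - k] of the
   polynomial [Z] vanishing on the [gamma a], and [u] is encoded by the interpolant of [u]
   on the [gamma a].  Both distance bounds come from counting roots.  A basis state of
   [e] blocks is [ev p_j] in block [j] with [deg p_j < m] and [p_j (gamma A) = u_A^(j)],
   so [Q := P (p_1, ..., p_e)] has degree [(m - 1) l < n]; Lagrange interpolation on the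
   [alpha i] writes [Q (gamma A)] as [\sum_i lambda_i Q (alpha i)], and since
   [x |-> (-1)^(tr x)] is a character of [(F, +)] in characteristic 2, the physical phases
   with [beta_i = beta * lambda_i] multiply to the logical phase. *)

Lemma size_sum_leq (R : nzRingType) I (r : seq I) (P : pred I)
    (f : I -> {poly R}) N :
  (forall i, P i -> (size (f i) <= N)%N) ->
  (size (\sum_(i <- r | P i) f i)%R <= N)%N.
Proof.
move=> hf; apply: (big_ind (fun p : {poly R} => size p <= N)%N) => // [|p q hp hq].
  by rewrite size_poly0.
by apply: leq_trans (size_polyD _ _) _; rewrite geq_max hp hq.
Qed.

Section Interpolation.
Variable F : fieldType.
Implicit Types (s : seq F) (g : {poly F}).

(* Newton's form of the interpolation polynomial of [v] on the nodes [s]. *)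
Fixpoint interp s (v : F -> F) : {poly F} :=
  if s is x :: s' then
    let p := interp s' v in let w := \prod_(y <- s') ('X - y%:P) in
    p + ((v x - p.[x]) / w.[x]) *: w
  else 0.

Lemma size_interp s v : (size (interp s v) <= size s)%N.
Proof.
elim: s => [|x s IH] /=; first by rewrite size_poly0.
apply: leq_trans (size_polyD _ _) _; rewrite geq_max (leq_trans IH) //=.
by apply: leq_trans (size_scale_leq _ _) _; rewrite size_prod_XsubC.
Qed.

Lemma horner_interp s v x : uniq s -> x \in s -> (interp s v).[x] = v x.
Proof.
elim: s => [|y s IH] //= /andP[ys us]; rewrite inE hornerD hornerZ.
case/orP => [/eqP ->|xs].
  have wy : (\prod_(z <- s) ('X - z%:P)).[y] != 0 by rewrite -/(root _ y) root_prod_XsubC.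
  by rewrite divfK // addrC subrK.
have /eqP -> : root (\prod_(z <- s) ('X - z%:P)) x by rewrite root_prod_XsubC.
by rewrite mulr0 addr0 IH.
Qed.

Definition lagrange s x := interp s (fun y => (y == x)%:R).

Lemma size_lagrange s x : (size (lagrange s x) <= size s)%N.
Proof. exact: size_interp. Qed.

Lemma horner_lagrange s x y : uniq s -> y \in s -> (lagrange s x).[y] = (y == x)%:R.
Proof. exact: horner_interp. Qed.

Lemma lagrange_expansion s g : uniq s -> (size g <= size s)%N ->
  g = \sum_(x <- s) g.[x] *: lagrange s x.
Proof.
move=> us szg; apply/eqP; rewrite -subr_eq0; apply/eqP/(roots_geq_poly_eq0 _ us).
  apply/allP => y ys; rewrite /root hornerD hornerN horner_sum (bigD1_seq y) //=.
  rewrite hornerZ horner_lagrange // eqxx mulr1 big1 ?addr0 ?subrr // => x xy.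
  by rewrite hornerZ horner_lagrange // eq_sym (negbTE xy) mulr0.
apply: leq_trans (size_polyD _ _) _; rewrite geq_max size_polyN szg /=.
by apply: size_sum_leq => x _; apply: leq_trans (size_scale_leq _ _) (size_lagrange _ _).
Qed.

End Interpolation.

Section PolySubstitution.
Variables (R : comNzRingType) (e d : nat) (p : 'I_e -> {poly R}).

Lemma horner_mmap_polyC (P : {mpoly R[e]}) c :
  (mmap polyC p P).[c] = meval (fun j => (p j).[c]) P.
Proof.
rewrite /mmap mevalE horner_sum; apply: eq_bigr => mm _.
rewrite hornerCM /mmap1 horner_prod; congr (_ * _).
by apply: eq_bigr => j _; rewrite horner_exp.
Qed.

Hypothesis size_p : forall j, (size (p j) <= d.+1)%N.

Lemma size_mmap1_polyC (mm : 'X_{1..e}) : (size (mmap1 p mm) <= (d * mdeg mm).+1)%N.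
Proof.
rewrite /mmap1 mdegE; elim/big_ind2: _ => [|q1 s1 q2 s2 h1 h2|j _].
- by rewrite size_poly1.
- apply: leq_trans (size_polyMleq _ _) _; move: h1 h2; rewrite mulnDr; lia.
- apply: leq_trans (size_poly_exp_leq _ _) _.
  have hj : ((size (p j)).-1 <= d)%N by have := size_p j; lia.
  by rewrite ltnS leq_mul2r hj orbT.
Qed.

Lemma size_mmap_polyC (P : {mpoly R[e]}) :
  (size (mmap polyC p P) <= (d * (msize P).-1).+1)%N.
Proof.
rewrite /mmap big_seq; apply: size_sum_leq => mm /msize_mdeg_lt hmm.
rewrite mul_polyC; apply: leq_trans (size_scale_leq _ _) _.
apply: leq_trans (size_mmap1_polyC mm) _; rewrite ltnS leq_mul2l.
by rewrite -ltnS prednK ?hmm ?orbT // (leq_ltn_trans _ hmm).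
Qed.

End PolySubstitution.

Section DualCode.
Variable F : finFieldType.

Definition rowspace r n (M : 'M[F]_(r, n)) : {set 'rV[F]_n} := [set v | (v <= M)%MS].

Lemma dotvE n (x y : 'rV[F]_n) : dotv x y = (x *m y^T) 0 0.
Proof. by rewrite /dotv mxE; apply: eq_bigr => i _; rewrite mxE. Qed.

Lemma dual_rowspace r n (M : 'M[F]_(r, n)) : dual_code (rowspace M) = rowspace (kermx M^T).
Proof.
apply/setP => y; rewrite !inE sub_kermx; apply/forallP/eqP => [h|h x].
  apply/matrixP => i j; rewrite ord1 !mxE.
  have := h (row j M); rewrite inE row_sub dotvE mxE => /eqP hj.
  by rewrite -[RHS]hj; apply: eq_bigr => l _; rewrite !mxE mulrC.
apply/implyP; rewrite inE => /submxP[w ->].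
by rewrite dotvE -mulmxA -[M]trmxK -trmx_mul h trmx0 mulmx0 mxE.
Qed.

Lemma dual_dual_rowspace r n (M : 'M[F]_(r, n)) :
  dual_code (dual_code (rowspace M)) = rowspace M.
Proof.
rewrite !dual_rowspace; set K := kermx M^T.
have sMK : (M <= kermx K^T)%MS.
  by rewrite sub_kermx -[M]trmxK -trmx_mul mulmx_ker trmx0.
have sKM : (kermx K^T <= M)%MS.
  rewrite -(geq_leqif (mxrank_leqif_sup sMK)) !mxrank_ker mxrank_tr mxrank_ker mxrank_tr.
  by rewrite subKn ?rank_leq_col.
by apply/setP => v; rewrite !inE; apply/idP/idP => /submx_trans; apply.
Qed.

Lemma card_rowspace r n (M : 'M[F]_(r, n)) : injective (fun w : 'rV[F]_r => w *m M) ->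
  #|rowspace M| = (#|F| ^ r)%N.
Proof.
move=> inj; have -> : rowspace M = (fun w : 'rV[F]_r => w *m M) @: [set: 'rV[F]_r].
  by apply/setP => v; rewrite inE; apply/submxP/imsetP => -[w]; exists w.
by rewrite card_imset // cardsT card_mx mul1n.
Qed.

Lemma linear_code_rowspace r n (M : 'M[F]_(r, n)) : is_linear_code (rowspace M).
Proof.
split => [|a x y]; first by rewrite inE sub0mx.
by rewrite !inE => hx hy; rewrite addmx_sub ?scalemx_sub.
Qed.

Lemma linear_code_dual n (C : {set 'rV[F]_n}) : is_linear_code (dual_code C).
Proof.
split => [|a x y]; rewrite !inE.
  by apply/forall_inP => z _; rewrite /dotv big1 // => i _; rewrite mxE mulr0.
move=> /forall_inP hx /forall_inP hy; apply/forall_inP => z zC.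
move: (hx z zC) (hy z zC); rewrite /dotv => /eqP zx /eqP zy.
rewrite (eq_bigr (fun i => a * (z 0 i * x 0 i) + z 0 i * y 0 i)).
  by rewrite big_split /= -mulr_sumr zx zy mulr0 addr0.
by move=> i _; rewrite !mxE mulrDr mulrCA.
Qed.

End DualCode.

Section TracePhase.
Variables (t : nat) (F : finFieldType).
Hypothesis cardF : #|F| = (2 ^ t)%N.

Lemma pchar2F : (2 \in [pchar F])%N.
Proof. exact: card_finPcharP cardF _. Qed.

Lemma abs_traceD (a b : F) : abs_trace (a + b) = abs_trace a + abs_trace b.
Proof.
rewrite /abs_trace -big_split /=; apply: eq_bigr => i _.
by apply: exprDn_pchar; rewrite pnatX pnatE //= pchar2F.
Qed.

Lemma abs_trace0 : abs_trace (0 : F) = 0.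
Proof. by rewrite /abs_trace big1 // => i _; rewrite expr0n expn_eq0. Qed.

(* Squaring permutes the conjugates [a ^+ 2 ^ i] cyclically, since [a ^+ 2 ^ t = a]. *)
Lemma abs_trace_sqr (a : F) : abs_trace a ^+ 2 = abs_trace a.
Proof.
rewrite -(pFrobenius_autE pchar2F) /abs_trace rmorph_sum /= cardF pfactorK //.
under eq_bigr => i _ do rewrite pFrobenius_autE -exprM -expnSr.
have := @big_ord_recl F 0 +%R t (fun i : 'I_t.+1 => a ^+ (2 ^ i)).
rewrite big_ord_recr /= expn0 expr1 -cardF expf_card => sum_shift.
by apply: (addIr a); rewrite sum_shift addrC.
Qed.

Lemma abs_trace01 (a : F) : abs_trace a = 0 \/ abs_trace a = 1.
Proof.
have : abs_trace a * (abs_trace a - 1) = 0.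
  by rewrite mulrBr -expr2 abs_trace_sqr mulr1 subrr.
by move/eqP; rewrite mulf_eq0 subr_eq0 => /orP[/eqP|/eqP]; [left|right].
Qed.

Lemma sgnFD (a b : F) : sgnF (a + b) = sgnF a * sgnF b.
Proof.
rewrite /sgnF abs_traceD.
by case: (abs_trace01 a) (abs_trace01 b) => -> [] ->;
  rewrite ?addr0 ?add0r ?(addrr_pchar2 pchar2F) ?eqxx ?oner_eq0 /= ?mul1r ?mulrNN ?mulr1.
Qed.

Lemma prod_sgnF I (r : seq I) (P : pred I) (f : I -> F) :
  \prod_(i <- r | P i) sgnF (f i) = sgnF (\sum_(i <- r | P i) f i).
Proof. by apply/esym/(big_morph _ sgnFD); rewrite /sgnF abs_trace0 eqxx. Qed.

End TracePhase.

Section ReedSolomonCSS.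
Variables (F : finFieldType) (n k m : nat) (alpha : 'I_n -> F) (gamma : 'I_k -> F).
Hypotheses (alpha_inj : injective alpha) (gamma_inj : injective gamma).
Hypothesis alpha_neq_gamma : forall i a, alpha i != gamma a.
Hypotheses (leq_km : (k <= m)%N) (leq_mn : (m <= n)%N).
Implicit Types (p q : {poly F}) (u : 'rV[F]_k) (h : 'rV[F]_(m - k)).

Lemma uniq_codom_alpha : uniq (codom alpha). Proof. exact/injectiveP. Qed.
Lemma uniq_codom_gamma : uniq (codom gamma). Proof. exact/injectiveP. Qed.

Definition ev (p : {poly F}) : 'rV[F]_n := \row_i p.[alpha i].

Lemma evD p q : ev (p + q) = ev p + ev q.
Proof. by apply/rowP => i; rewrite !mxE hornerD. Qed.

Lemma ev_eq0 p : (size p <= n)%N -> ev p = 0 -> p = 0.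
Proof.
move=> szp evp; apply: (roots_geq_poly_eq0 _ uniq_codom_alpha).
  apply/allP => _ /codomP[i ->]; apply/eqP.
  by have /rowP/(_ i) := evp; rewrite !mxE.
by rewrite size_codom card_ord.
Qed.

Definition vanishing : {poly F} := \prod_(y <- codom gamma) ('X - y%:P).

Lemma size_vanishing : size vanishing = k.+1.
Proof. by rewrite size_prod_XsubC size_codom card_ord. Qed.

Lemma vanishing_neq0 : vanishing != 0.
Proof. by rewrite -size_poly_eq0 size_vanishing. Qed.

Lemma vanishing_gamma a : vanishing.[gamma a] = 0.
Proof. by apply/eqP; rewrite -/(root _ _) root_prod_XsubC codom_f. Qed.

Lemma vanishing_alpha_neq0 i : vanishing.[alpha i] != 0.
Proof.
rewrite -/(root _ _) root_prod_XsubC; apply/codomP => -[a /eqP].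
by rewrite (negbTE (alpha_neq_gamma i a)).
Qed.

Definition encode u : {poly F} :=
  \sum_a u 0 a *: lagrange (codom gamma) (gamma a).

Lemma size_encode u : (size (encode u) <= k)%N.
Proof.
apply: size_sum_leq => a _; apply: leq_trans (size_scale_leq _ _) _.
by rewrite -[k in (_ <= k)%N]card_ord -(size_codom gamma) size_lagrange.
Qed.

Lemma horner_encode u b : (encode u).[gamma b] = u 0 b.
Proof.
rewrite horner_sum (bigD1 b) //= hornerZ horner_lagrange ?uniq_codom_gamma ?codom_f //.
rewrite eqxx mulr1 big1 ?addr0 // => a ab.
rewrite hornerZ horner_lagrange ?uniq_codom_gamma ?codom_f // (inj_eq gamma_inj).
by rewrite eq_sym (negbTE ab) mulr0.
Qed.

Definition poly_of_row h : {poly F} := \sum_j h 0 j *: 'X^j.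

Lemma size_poly_of_row h : (size (poly_of_row h) <= m - k)%N.
Proof.
apply: size_sum_leq => j _; apply: leq_trans (size_scale_leq _ _) _.
by rewrite size_polyXn.
Qed.

Lemma coef_poly_of_row h (j : 'I_(m - k)) : (poly_of_row h)`_j = h 0 j.
Proof.
rewrite coef_sum (bigD1 j) //= coefZ coefXn eqxx mulr1 big1 ?addr0 // => i.
by rewrite -val_eqE eq_sym coefZ coefXn => /negbTE ->; rewrite mulr0.
Qed.

Lemma poly_of_row_coefs p : (size p <= m - k)%N -> poly_of_row (\row_j p`_j) = p.
Proof.
move=> szp; rewrite -{2}(take_poly_id szp) /take_poly poly_def.
by apply: eq_bigr => j _; rewrite mxE.
Qed.

Lemma size_code_poly u h : (size (encode u + poly_of_row h * vanishing)%R <= m)%N.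
Proof.
apply: leq_trans (size_polyD _ _) _; rewrite geq_max (leq_trans (size_encode u)) //=.
apply: leq_trans (size_polyMleq _ _) _; rewrite size_vanishing.
by have := size_poly_of_row h; lia.
Qed.

Definition enc_mx : 'M[F]_(k, n) :=
  \matrix_(a, i) (lagrange (codom gamma) (gamma a)).[alpha i].
Definition stab_mx : 'M[F]_(m - k, n) := \matrix_(j, i) ('X^j * vanishing).[alpha i].

Lemma mul_row_evalmx r (w : 'rV[F]_r) (q : 'I_r -> {poly F}) :
  w *m \matrix_(j, i) (q j).[alpha i] = ev (\sum_j w 0 j *: q j).
Proof.
apply/rowP => i; rewrite !mxE horner_sum; apply: eq_bigr => j _.
by rewrite !mxE hornerZ.
Qed.

Lemma mul_enc_mx u : u *m enc_mx = ev (encode u).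
Proof. exact: mul_row_evalmx. Qed.

Lemma mul_stab_mx h : h *m stab_mx = ev (poly_of_row h * vanishing).
Proof.
rewrite mul_row_evalmx /poly_of_row mulr_suml; congr ev.
by apply: eq_bigr => j _; rewrite scalerAl.
Qed.

Lemma enc_stab_eq0 u h : u *m enc_mx + h *m stab_mx = 0 -> u = 0 /\ h = 0.
Proof.
rewrite mul_enc_mx mul_stab_mx -evD.
move=> /(ev_eq0 (leq_trans (size_code_poly u h) leq_mn)) p0.
have u0 : u = 0.
  apply/rowP => b; rewrite mxE -horner_encode.
  have := congr1 (horner^~ (gamma b)) p0.
  by rewrite /= hornerD hornerM vanishing_gamma mulr0 addr0 horner0.
split => //; move/eqP: p0; rewrite u0 /encode big1 ?add0r => [|a _]; last first.
  by rewrite mxE scale0r.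
rewrite mulf_eq0 (negbTE vanishing_neq0) orbF => /eqP h0.
apply/rowP => j; have := congr1 (fun q => q`_j) h0.
by rewrite /= coef_poly_of_row mxE coef0.
Qed.

Lemma mulmx_enc_stab_inj :
  injective (fun w : 'rV[F]_(k + (m - k)) => w *m col_mx enc_mx stab_mx).
Proof.
move=> w1 w2 /= /eqP; rewrite -subr_eq0 -mulmxBl -(hsubmxK (w1 - w2)) mul_row_col.
case/eqP/enc_stab_eq0 => l0 r0; apply/eqP.
by rewrite -subr_eq0 -(hsubmxK (w1 - w2)) l0 r0 row_mx0.
Qed.

Lemma mulmx_stab_inj : injective (fun h => h *m stab_mx).
Proof.
move=> h1 h2 /= /eqP; rewrite -subr_eq0 -mulmxBl => /eqP h0.
have := @enc_stab_eq0 0 (h1 - h2); rewrite mul0mx add0r => /(_ h0) [_ /eqP].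
by rewrite subr_eq0 => /eqP.
Qed.

Definition C1 := rowspace (col_mx enc_mx stab_mx).
Definition C2 := dual_code (rowspace stab_mx).

Lemma dual_C2 : dual_code C2 = rowspace stab_mx.
Proof. exact: dual_dual_rowspace. Qed.

Lemma C1_ev v : v \in C1 -> exists2 p : {poly F}, (size p <= m)%N & v = ev p.
Proof.
rewrite inE => /submxP[w ->].
rewrite -(hsubmxK w) mul_row_col mul_enc_mx mul_stab_mx -evD.
by exists (encode (lsubmx w) + poly_of_row (rsubmx w) * vanishing); first exact: size_code_poly.
Qed.

Lemma ev_mul_vanishing_stab p :
  (size p <= m - k)%N -> ev (p * vanishing) \in rowspace stab_mx.
Proof. by move=> szp; rewrite inE -(poly_of_row_coefs szp) -mul_stab_mx submxMl. Qed.

Lemma CSS_C1_C2 : is_CSS_code C1 C2 enc_mx.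
Proof.
split.
- by split; [apply: linear_code_rowspace | apply: linear_code_dual].
- rewrite dual_C2; apply/subsetP => v; rewrite !inE => /submx_trans; apply.
  by rewrite -addsmxE addsmxSr.
- by move=> u; rewrite inE -addsmxE (submx_trans _ (addsmxSl _ _)) ?submxMl.
- move=> u; rewrite dual_C2 inE => /submxP[h uh].
  by have := @enc_stab_eq0 u (- h); rewrite mulNmx uh subrr => /(_ erefl) [].
- rewrite dual_C2 !card_rowspace ?expnD ?subnKC //.
  + exact: mulmx_enc_stab_inj.
  + exact: mulmx_stab_inj.
Qed.

(* A nonzero polynomial of size at most [m] vanishes at fewer than [m] of the [alpha i]. *)
Lemma wt_ev p : p != 0 -> (size p <= m)%N -> (n - m + 1 <= wt (ev p))%N.
Proof.
move=> p_neq0 szp; set S := [set i | ev p 0 i == 0].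
have card_S : (#|S| < m)%N.
  have uS : uniq (image alpha S) by apply/dinjectiveP => i j _ _ /alpha_inj.
  have rS : all (root p) (image alpha S).
    by apply/allP => y /imageP[i]; rewrite inE mxE => /eqP pi0 ->; apply/eqP.
  by have := max_poly_roots p_neq0 rS uS; rewrite size_image => /leq_trans; apply.
have -> : wt (ev p) = #|~: S| by apply: eq_card => i; rewrite !inE.
by have := cardsC S; rewrite card_ord; lia.
Qed.

Lemma ev0 : ev 0 = 0.
Proof. by apply/rowP => i; rewrite !mxE horner0. Qed.

Lemma wt_C1 x : x \in C1 -> x \notin dual_code C2 -> (n - m + 1 <= wt x)%N.
Proof.
case/C1_ev => p szp ->; rewrite dual_C2 => ev_notin; apply: wt_ev szp.
by apply: contraNneq ev_notin => ->; rewrite ev0 inE sub0mx.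
Qed.

(* On the support [S] of a light word of [C2], [ev f] agrees with [ev (r * vanishing)] in
   [C2^perp], where [r] interpolates [f / vanishing] on the [#|S| <= m - k] nodes of [S]. *)
Lemma wt_C2 x : x \in C2 -> x \notin dual_code C1 -> (m - k + 1 <= wt x)%N.
Proof.
move=> xC2; rewrite addn1 ltnNge; apply: contra => wt_x.
rewrite inE; apply/forall_inP => _ /C1_ev[f szf ->].
set S := [set i | x 0 i != 0].
have uS : uniq (image alpha S) by apply/dinjectiveP => i j _ _ /alpha_inj.
set r := interp (image alpha S) (fun z => f.[z] / vanishing.[z]).
have szr : (size r <= m - k)%N.
  by apply: leq_trans (size_interp _ _) _; rewrite size_image.
move: xC2; rewrite /C2 inE => /forall_inP/(_ _ (ev_mul_vanishing_stab szr))/eqP <-.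
apply/eqP/eq_bigr => i _; rewrite !mxE.
have [->|xi] := eqVneq (x 0 i) 0; first by rewrite !mulr0.
rewrite hornerM horner_interp ?divfK ?vanishing_alpha_neq0 //.
by apply: image_f; rewrite inE.
Qed.

Lemma coset_ev u x : x - u *m enc_mx \in dual_code C2 ->
  exists p : {poly F}, [/\ (size p <= m)%N, x = ev p & forall a, p.[gamma a] = u 0 a].
Proof.
rewrite dual_C2 inE => /submxP[h xh].
exists (encode u + poly_of_row h * vanishing); split.
- exact: size_code_poly.
- by rewrite evD -mul_enc_mx -mul_stab_mx -xh addrC subrK.
- by move=> a; rewrite hornerD hornerM vanishing_gamma mulr0 addr0 horner_encode.
Qed.

Lemma horner_lagrange_alpha (g : {poly F}) (c : F) : (size g <= n)%N ->
  g.[c] = \sum_i g.[alpha i] * (lagrange (codom alpha) (alpha i)).[c].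
Proof.
rewrite -[n in (_ <= n)%N]card_ord -(size_codom alpha) => szg.
rewrite {1}(lagrange_expansion uniq_codom_alpha szg).
by rewrite horner_sum big_image; apply: eq_bigr => i _; rewrite hornerZ.
Qed.

Lemma transversal_gate t e (P : {mpoly F[e]}) (A : 'I_k) (beta : F) :
  #|F| = (2 ^ t)%N -> (m.-1 * (msize P).-1 < n)%N ->
  forall (u : 'I_e -> 'rV[F]_k) (x : {ffun 'I_e -> 'rV[F]_n}),
  phys_gate P (fun i => beta * (lagrange (codom alpha) (alpha i)).[gamma A])
    (logical_ket C2 enc_mx u) x =
  sgnF (beta * meval (fun j => u j 0 A) P) * logical_ket C2 enc_mx u x.
Proof.
move=> cardF deg_lt u x; rewrite /phys_gate /logical_ket.
case: ifP => [/forallP x_coset|_]; last by rewrite !mulr0.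
have [p hp] := fin_all_exists (fun j => coset_ev (x_coset j)).
set Q := mmap polyC p P.
have szQ : (size Q <= n)%N.
  apply: leq_trans (size_mmap_polyC _ _) deg_lt => j.
  by have [szp _ _] := hp j; apply: leq_trans szp (leqSpred m).
have Q_alpha i : meval (fun j => x j 0 i) P = Q.[alpha i].
  by rewrite horner_mmap_polyC; apply: meval_eq => j; have [_ -> _] := hp j; rewrite mxE.
have Q_gamma : meval (fun j => u j 0 A) P = Q.[gamma A].
  by rewrite horner_mmap_polyC; apply: meval_eq => j; have [_ _ ->] := hp j.
under eq_bigr do rewrite Q_alpha.
rewrite (prod_sgnF cardF) !mulr1 Q_gamma (horner_lagrange_alpha _ szQ) mulr_sumr.
by congr sgnF; apply: eq_bigr => i _; rewrite mulrAC mulrA.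
Qed.

End ReedSolomonCSS.

Lemma exists_disjoint_nodes (T : finType) n k : (n + k <= #|T|)%N ->
  exists (alpha : 'I_n -> T) (gamma : 'I_k -> T),
    [/\ injective alpha, injective gamma & forall i a, alpha i != gamma a].
Proof.
move=> hT; pose pts i := enum_val (widen_ord hT i).
have pts_inj : injective pts by move=> i j /enum_val_inj/(congr1 val) ij; apply: val_inj.
exists (pts \o lshift k), (pts \o @rshift n k); split.
- by move=> i j /= /pts_inj/lshift_inj.
- by move=> a b /= /pts_inj/rshift_inj.
- by move=> i a; apply/eqP => /= /pts_inj/(congr1 val) /=; have := ltn_ord i; lia.
Qed.

Unset Implicit Arguments.

Theorem theorem5p3 (lbar m n k t : nat) (F : finFieldType) :
  (0 < lbar)%N ->
  (m.-1 * lbar < n)%N ->            (* m < 1 + n / lbar *)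
  (1 <= k <= m)%N ->
  #|F| = (2 ^ t)%N ->
  (n + k <= 2 ^ t)%N ->
  exists (C1 C2 : {set 'rV[F]_n}) (G : 'M[F]_(k, n)),
    [/\ is_CSS_code C1 C2 G,
        css_dist_ge C1 C2 (minn (n - m + 1) (m - k + 1))
      & forall (e l : nat), (e <= lbar)%N -> (l <= lbar)%N ->
        forall P : {mpoly F[e]}, (msize P <= l.+1)%N ->
        forall (A : 'I_k) (beta : F),
        exists (bs : 'I_n -> F) (omega : algC), `|omega| = 1 /\
          forall (u : 'I_e -> 'rV[F]_k) (x : {ffun 'I_e -> 'rV[F]_n}),
            phys_gate P bs (logical_ket C2 G u) x =
            omega * sgnF (beta * meval (fun j => u j 0 A) P) * logical_ket C2 G u x].
Proof.
move=> lbar_gt0 deg_lt /andP[_ leq_km] cardF leq_nk.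
have leq_mn : (m <= n)%N by have := leq_pmulr m.-1 lbar_gt0; lia.
have leq_nkF : (n + k <= #|F|)%N by rewrite cardF.
have [alpha [gamma [alpha_inj gamma_inj alpha_gamma]]] := exists_disjoint_nodes leq_nkF.
exists (C1 m alpha gamma), (C2 m alpha gamma), (enc_mx alpha gamma); split.
- exact: CSS_C1_C2 alpha_inj gamma_inj leq_km leq_mn.
- split=> x x1 x2.
  + exact: leq_trans (geq_minl _ _) (wt_C1 alpha_inj leq_km leq_mn x1 x2).
  + exact: leq_trans (geq_minr _ _) (wt_C2 alpha_inj alpha_gamma leq_km leq_mn x1 x2).
- move=> e l _ le_l P szP A beta.
  exists (fun i => beta * (lagrange (codom alpha) (alpha i)).[gamma A]), 1.
  split=> [|u x]; first by rewrite normr1.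
  rewrite mul1r (transversal_gate alpha_inj gamma_inj leq_km leq_mn A beta cardF) //.
  by apply: leq_ltn_trans deg_lt; rewrite leq_mul2l; apply/orP; right; lia.
Qed.
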